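(* Let $A$ be an $n\times m$ matrix with entries in $[0,1]$, and suppose the row player follows follow-the-regularized-leader with a regularizer $R:\Delta_n\to\mathbb{R}$, i.e. $x_t=\arg\min_{x\in\Delta_n}x^\top\big(\sum_{i=1}^{t-1}Ay_i\big)+R(x)$, where the minimizer is assumed to be unique at every round. If there exists a fully mixed (all entries positive) minimax strategy of the row player, then this algorithm has the stability property: for every minimax strategy $y^*$ of the column player and every round $t$, if $y_t=y^*$ then $x_{t+1}=x_t$.
   Context: Repeated two-player zero-sum game: at round $t$ the row player plays $x_t\in\Delta_n$ and the column player $y_t\in\Delta_m$; the row player minimizes, the column player maximizes $x_t^\top Ay_t$. $v$ is the value of the game; a minimax strategy of the row player is $x$ with $\max_{y\in\Delta_m}x^\top Ay=v$, and of the column player is $y$ with $\min_{x\in\Delta_n}x^\top Ay=v$. *)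

From HB Require Import structures.
From mathcomp Require Import all_boot all_order all_algebra.
From mathcomp Require Import reals.
Set Implicit Arguments. Unset Strict Implicit. Unset Printing Implicit Defensive.
Import Order.TTheory GRing.Theory Num.Theory.
Local Open Scope ring_scope.

Definition in_simplex (R : realType) (n : nat) (x : 'cV[R]_n) : Prop :=
  (forall i, 0 <= x i 0) /\ \sum_i x i 0 = 1.

Definition fully_mixed (R : realType) (n : nat) (x : 'cV[R]_n) : Prop :=
  forall i, 0 < x i 0.

Definition payoff (R : realType) (n m : nat) (A : 'M[R]_(n, m))
  (x : 'cV[R]_n) (y : 'cV[R]_m) : R := (x^T *m A *m y) 0 0.

(* v is the value of the game: v = min_{x in Delta_n} max_{y in Delta_m} x^T A y. *)
Definition game_value (R : realType) (n m : nat) (A : 'M[R]_(n, m)) (v : R) : Prop :=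
  (exists2 x, in_simplex x & forall y, in_simplex y -> payoff A x y <= v) /\
  (forall x, in_simplex x -> exists2 y, in_simplex y & v <= payoff A x y).

Definition row_minimax (R : realType) (n m : nat) (A : 'M[R]_(n, m)) (v : R)
  (x : 'cV[R]_n) : Prop :=
  in_simplex x /\
  (exists2 y, in_simplex y & payoff A x y = v) /\
  (forall y, in_simplex y -> payoff A x y <= v).

Definition col_minimax (R : realType) (n m : nat) (A : 'M[R]_(n, m)) (v : R)
  (y : 'cV[R]_m) : Prop :=
  in_simplex y /\
  (exists2 x, in_simplex x & payoff A x y = v) /\
  (forall x, in_simplex x -> v <= payoff A x y).

(* FTRL objective at round t (rounds are 1-based): x^T (sum_{i=1}^{t-1} A y_i) + Reg x. *)
Definition ftrl_obj (R : realType) (n m : nat) (A : 'M[R]_(n, m))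
  (Reg : 'cV[R]_n -> R) (y : nat -> 'cV[R]_m) (t : nat) (x : 'cV[R]_n) : R :=
  (x^T *m (\sum_(1 <= i < t) A *m y i)) 0 0 + Reg x.

Definition unique_argmin_simplex (R : realType) (n : nat) (f : 'cV[R]_n -> R)
  (z : 'cV[R]_n) : Prop :=
  in_simplex z /\ forall x, in_simplex x -> x <> z -> f z < f x.

(* Let xs be a fully mixed minimax strategy of the row player and ys one of
   the column player. Every pure row i earns (A ys)_i >= v against ys, while
   the xs-average of these payoffs is at most v; positivity of xs forces
   (A ys)_i = v for every i. Hence x^T A ys = v on the whole simplex, so when
   y_t = ys the FTRL objective of round t+1 is that of round t shifted by the
   constant v, and the unique minimizer does not move. The bounds on the
   entries of A and the game value hypothesis play no role. *)

From HB Require Import structures.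
From mathcomp Require Import all_boot all_order all_algebra.
From mathcomp Require Import reals.
Set Implicit Arguments. Unset Strict Implicit. Unset Printing Implicit Defensive.
Import Order.TTheory GRing.Theory Num.Theory.
Local Open Scope ring_scope.

Lemma weighted_avg_le_lb_eq (R : numDomainType) (n : nat) (w c : 'I_n -> R) (v : R) :
  (forall i, 0 < w i) -> \sum_i w i = 1 ->
  (forall i, v <= c i) -> \sum_i w i * c i <= v ->
  forall i, c i = v.
Proof.
move=> w_gt0 w_sum1 c_ge avg_le i.
have terms_ge0 j : 0 <= w j * (c j - v).
  by rewrite mulr_ge0 ?subr_ge0 ?(ltW (w_gt0 j)).
have sum_eq0 : \sum_j w j * (c j - v) = 0.
  apply/eqP; rewrite eq_le sumr_ge0 // andbT.
  under eq_bigr do rewrite mulrBr.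
  by rewrite sumrB -mulr_suml w_sum1 mul1r subr_le0.
have /eqP := psumr_eq0P (fun j _ => terms_ge0 j) sum_eq0 (i := i) isT.
by rewrite mulf_eq0 gt_eqF //= subr_eq0 => /eqP.
Qed.

Lemma dot_colE (R : pzSemiRingType) (n : nat) (z c : 'cV[R]_n) :
  (z^T *m c) 0 0 = \sum_i z i 0 * c i 0.
Proof. by rewrite mxE; apply: eq_bigr => i _; rewrite mxE. Qed.

Lemma dot_delta (R : pzSemiRingType) (n : nat) (i : 'I_n) (c : 'cV[R]_n) :
  ((delta_mx i 0 : 'cV[R]_n)^T *m c) 0 0 = c i 0.
Proof.
rewrite dot_colE (bigD1 i) //= mxE !eqxx mul1r big1 ?addr0 //.
by move=> j /negbTE ji; rewrite mxE ji mul0r.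
Qed.

Section Simplex.

Variables (R : realType) (n : nat).

Lemma simplex_dot_const (z c : 'cV[R]_n) (v : R) :
  in_simplex z -> (forall i, c i 0 = v) -> (z^T *m c) 0 0 = v.
Proof.
move=> [_ z_sum1] c_const; rewrite dot_colE.
under eq_bigr do rewrite c_const.
by rewrite -mulr_suml z_sum1 mul1r.
Qed.

Lemma in_simplex_delta (i : 'I_n) : in_simplex (delta_mx i 0 : 'cV[R]_n).
Proof.
split=> [j|]; first by rewrite mxE; case: (_ && _).
rewrite (bigD1 i) //= mxE !eqxx big1 ?addr0 // => j /negbTE ji.
by rewrite mxE ji.
Qed.

Lemma unique_argmin_simplex_shift (f g : 'cV[R]_n -> R) (c : R) (zf zg : 'cV[R]_n) :
  (forall z, in_simplex z -> g z = f z + c) ->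
  unique_argmin_simplex f zf -> unique_argmin_simplex g zg -> zg = zf.
Proof.
move=> gE [zf_in zf_min] [zg_in zg_min].
have [//|/eqP zg_neq] := eqVneq zg zf.
have := zf_min _ zg_in zg_neq.
have := zg_min _ zf_in (nesym zg_neq); rewrite !gE // ltrD2r => lt_gf lt_fg.
by have := lt_trans lt_fg lt_gf; rewrite ltxx.
Qed.

End Simplex.

Section Game.

Variables (R : realType) (n m : nat) (A : 'M[R]_(n, m)) (v : R).

Lemma payoff_dot (x : 'cV[R]_n) (y : 'cV[R]_m) :
  payoff A x y = (x^T *m (A *m y)) 0 0.
Proof. by rewrite /payoff mulmxA. Qed.

Lemma col_minimax_row_ge (ystar : 'cV[R]_m) :
  col_minimax A v ystar -> forall i, v <= (A *m ystar) i 0.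
Proof.
move=> [_ [_ ystar_ge]] i.
by have := ystar_ge _ (in_simplex_delta R i); rewrite payoff_dot dot_delta.
Qed.

Lemma col_minimax_equalizer (xs : 'cV[R]_n) (ystar : 'cV[R]_m) :
  row_minimax A v xs -> fully_mixed xs -> col_minimax A v ystar ->
  forall i, (A *m ystar) i 0 = v.
Proof.
move=> [[_ xs_sum1] [_ xs_le]] xs_mixed ystar_minimax.
apply: (weighted_avg_le_lb_eq (w := fun i => xs i 0) (c := fun i => (A *m ystar) i 0)).
- exact: xs_mixed.
- exact: xs_sum1.
- exact: col_minimax_row_ge.
- by rewrite -dot_colE -payoff_dot xs_le //; case: ystar_minimax.
Qed.

Lemma ftrl_objS (Reg : 'cV[R]_n -> R) (y : nat -> 'cV[R]_m) (t : nat)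
    (z : 'cV[R]_n) : (1 <= t)%N ->
  ftrl_obj A Reg y t.+1 z = ftrl_obj A Reg y t z + (z^T *m (A *m y t)) 0 0.
Proof.
move=> t_ge1; rewrite /ftrl_obj big_nat_recr //= mulmxDr mxE.
by rewrite addrAC.
Qed.

End Game.

Theorem theorem19 (R : realType) (n m : nat) (A : 'M[R]_(n, m))
  (hA : forall i j, 0 <= A i j <= 1)
  (Reg : 'cV[R]_n -> R)
  (x : nat -> 'cV[R]_n) (y : nat -> 'cV[R]_m)
  (hy : forall t, (1 <= t)%N -> in_simplex (y t))
  (hx : forall t, (1 <= t)%N -> unique_argmin_simplex (ftrl_obj A Reg y t) (x t))
  (v : R) (hv : game_value A v)
  (hmixed : exists2 xs, row_minimax A v xs & fully_mixed xs) :
  forall ystar, col_minimax A v ystar ->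
  forall t, (1 <= t)%N -> y t = ystar -> x t.+1 = x t.
Proof.
move=> ystar ystar_minimax t t_ge1 yt_eq.
have [xs xs_minimax xs_mixed] := hmixed.
have equalizer := col_minimax_equalizer xs_minimax xs_mixed ystar_minimax.
apply: (unique_argmin_simplex_shift (c := v) _ (hx t t_ge1) (hx t.+1 isT)).
move=> z z_in; rewrite ftrl_objS // yt_eq; congr (_ + _).
exact: (simplex_dot_const z_in equalizer).
Qed.
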